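(* Let $X$ be a locally convex space, let $T:X\rightrightarrows X^{*}$, and let $\mathcal{V}$ be a class of algebraically open subsets of $X$ with $X\in\mathcal{V}$. Then $T\in\mathcal{M}(X)$ and $T$ is identified by every $V\in\mathcal{V}$ if and only if $T$ is representable and $T$ is $V$-NI for every $V\in\mathcal{V}$.
   Context: $(X,\tau)$ is a non-trivial Hausdorff locally convex space, $X^*$ its dual with weak-star topology $\omega^*$, $Z=X\times X^*$ with topology $\tau\times\omega^*$, $c(x,x^* )=\langle x,x^*\rangle$. Operators are identified with their graphs; $D(T)$ is the domain; $T|_V$ has graph $\operatorname{Graph}T\cap(V\times X^* )$. $\varphi_{T}(x,x^{*})=\sup\{\langle x,u^{*}\rangle+\langle u,x^{*}\rangle-\langle u,u^{*}\rangle\mid(u,u^{*})\in T\}$ ($\sup\emptyset=-\infty$). $\mathcal M(X)$: monotone operators with non-empty graph. $T$ is representable if there is a proper convex $\tau\times\omega^*$-lsc $h:Z\to\overline{\mathbb R}$ with $h\ge c$ and $\{h=c\}=\operatorname{Graph}T$. $V$ identifies $T$ if $\{z\in V\times X^*\mid\varphi_{T|_V}(z)\le c(z)\}\subset\operatorname{Graph}T$; $T$ is $V$-NI if $\varphi_{T|_V}\ge c$ on $V\times X^*$. Algebraically open: equal to its core. *)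

From HB Require Import structures.
From mathcomp Require Import all_boot all_order all_algebra.
From mathcomp Require Import all_classical all_reals all_analysis.
Set Implicit Arguments. Unset Strict Implicit. Unset Printing Implicit Defensive.
Import Order.TTheory GRing.Theory Num.Theory.
Import numFieldTopology.Exports.
Local Open Scope classical_set_scope.
Local Open Scope ring_scope.

Section Defs.
Context (R : realType) (X : tvsType R).

Record dual := Dual {
  dual_fun :> X -> R;
  dual_linear : forall (a : R) (x y : X),
      dual_fun (a *: x + y) = a * dual_fun x + dual_fun y;
  dual_cont : continuous dual_fun }.

(** Z = X x X^* ; operators are identified with their graphs. *)
Definition Z := (X * dual)%type.

Definition coupling (z : Z) : R := z.2 z.1.

(** Openness / closedness in the product topology tau x omega^* on Z
    (omega^* = weak-star topology on X^*, whose basic neighbourhoods are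
    given by finitely many evaluation points and a radius). *)
Definition Zopen (A : set Z) : Prop :=
  forall z, A z -> exists N : set X, nbhs z.1 N /\
    exists s : seq X, exists2 e : R, 0 < e &
      forall (y : X) (y' : dual), N y ->
        (forall u, u \in s -> `|y' u - z.2 u| < e) -> A (y, y').
Definition Zclosed (A : set Z) : Prop := Zopen (~` A).

Definition proper_fun (h : Z -> \bar R) : Prop :=
  (forall z, h z != -oo%E) /\ exists z, h z \is a fin_num.

Definition convex_fun (h : Z -> \bar R) : Prop :=
  forall (z1 z2 z : Z) (t : R), 0 < t < 1 ->
    z.1 = t *: z1.1 + (1 - t) *: z2.1 ->
    (forall u, z.2 u = t * z1.2 u + (1 - t) * z2.2 u) ->
    (h z <= t%:E * h z1 + (1 - t)%:E * h z2)%E.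

Definition lsc_fun (h : Z -> \bar R) : Prop :=
  forall r : R, Zclosed [set z | (h z <= r%:E)%E].

Definition phiT (T : set Z) (z : Z) : \bar R :=
  ereal_sup [set ((z.2 u.1 + u.2 z.1 - u.2 u.1)%:E) | u in T].

Definition restr (T : set Z) (V : set X) : set Z := [set z | T z /\ V z.1].

Definition monotone_op (T : set Z) : Prop :=
  forall z w, T z -> T w -> 0 <= z.2 (z.1 - w.1) - w.2 (z.1 - w.1).

Definition in_MX (T : set Z) : Prop := monotone_op T /\ T !=set0.

Definition representable (T : set Z) : Prop :=
  exists h : Z -> \bar R, [/\ proper_fun h, convex_fun h, lsc_fun h,
    (forall z, (coupling z)%:E <= h z)%E &
    [set z | h z = (coupling z)%:E] = T].

Definition identifies (V : set X) (T : set Z) : Prop :=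
  forall z : Z, V z.1 -> (phiT (restr T V) z <= (coupling z)%:E)%E -> T z.

Definition V_NI (V : set X) (T : set Z) : Prop :=
  forall z : Z, V z.1 -> ((coupling z)%:E <= phiT (restr T V) z)%E.

Definition core (A : set X) : set X :=
  [set x | forall d : X, exists2 delta : R, 0 < delta &
     forall t : R, 0 <= t <= delta -> A (x + t *: d)].

Definition alg_open (A : set X) : Prop := A = core A.

End Defs.

From HB Require Import structures.
From mathcomp Require Import all_boot all_order all_algebra.
From mathcomp Require Import all_classical all_reals all_analysis.
From mathcomp Require Import ring lra.
Import Order.TTheory GRing.Theory Num.Theory.
Import numFieldTopology.Exports.
Local Open Scope classical_set_scope.
Local Open Scope ring_scope.

(* Fitzpatrick's function phiT T is a supremum of weak-star continuous affine
   functions, hence convex and lower semicontinuous; when T is monotone and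
   identified by X it is >= c everywhere with equality exactly on T, so it
   represents T.  Conversely, convexity of a representative h at midpoints
   forces monotonicity.  For identification by V, suppose z.1 is in V,
   phiT (T|V) z <= c z, but h z > c z.  By lower semicontinuity a weak-star box
   around (z, c z) misses the epigraph of h, and the algebraic Hahn-Banach
   theorem separates them strictly by an affine functional (a, w, lam).  Moving
   z slightly along the direction it defines, which V permits because it is
   algebraically open, makes <z^* - u^*, z - u> uniformly positive over T|V,
   contradicting V-NI. *)

Set Implicit Arguments.
Unset Strict Implicit.
Unset Printing Implicit Defensive.

Lemma inf_pmulE (R : realType) (S : set R) (k : R) : 0 < k -> S !=set0 ->
  has_lbound S -> inf [set k * s | s in S] = k * inf S.
Proof.
move=> k0 S0 [m Sm].
have kS0 : [set k * s | s in S] !=set0 by case: S0 => s Ss; exists (k * s), s.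
have kSlb : has_lbound [set k * s | s in S].
  by exists (k * m) => _ [s Ss <-]; rewrite ler_pM2l //; apply: Sm.
have Slb : has_lbound S by exists m.
apply/eqP; rewrite eq_le; apply/andP; split.
- rewrite -ler_pdivrMl //; apply: lb_le_inf => // s Ss.
  by rewrite ler_pdivrMl //; apply: ge_inf => //; exists s.
- apply: lb_le_inf => // _ [s Ss <-].
  by rewrite ler_pM2l //; apply: ge_inf.
Qed.

Section HahnBanach.
Context (R : realType) (E : lmodType R).

Definition sublinear (p : E -> R) :=
  (forall x y, p (x + y) <= p x + p y) /\
  (forall (k : R) x, 0 < k -> p (k *: x) = k * p x).

Section Sublinear.
Variable p : E -> R.
Hypothesis sp : sublinear p.

Lemma sublinear0 : p 0 = 0.
Proof. by have := sp.2 2 0 (ltr0Sn _ 1); rewrite scaler0 => h; lra. Qed.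

Lemma sublinearZ_ge0 (k : R) x : 0 <= k -> p (k *: x) = k * p x.
Proof.
rewrite le_eqVlt => /orP[/eqP <-|]; last exact: sp.2.
by rewrite scale0r mul0r sublinear0.
Qed.

Lemma sublinearN_le x : - p (- x) <= p x.
Proof. by have := sp.1 x (- x); rewrite subrr sublinear0; lra. Qed.

(* A minimal sublinear functional [q] coincides with its [tilt y], whence
   [q (- y) <= - q y]: minimal sublinear functionals are linear. *)
Definition tilt_set (y x : E) :=
  [set p (x + t *: y) - t * p y | t in [set t : R | 0 <= t]].
Definition tilt (y x : E) := inf (tilt_set y x).

Lemma tilt_set_neq0 y x : tilt_set y x !=set0.
Proof. by exists (p (x + 0 *: y) - 0 * p y); exists 0 => /=. Qed.

Lemma tilt_set_lbound y x : has_lbound (tilt_set y x).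
Proof.
exists (- p (- x)) => _ [t /= t0 <-].
have := sp.1 (x + t *: y) (- x).
by rewrite addrC addKr sublinearZ_ge0 //; lra.
Qed.

Lemma tilt_le y x : tilt y x <= p x.
Proof.
have -> : p x = p (x + 0 *: y) - 0 * p y by rewrite scale0r addr0 mul0r subr0.
by apply: ge_inf; [exact: tilt_set_lbound | exists 0 => /=].
Qed.

Lemma tiltN y : tilt y (- y) <= - p y.
Proof.
have -> : - p y = p (- y + 1 *: y) - 1 * p y.
  by rewrite scale1r addNr sublinear0 mul1r sub0r.
by apply: ge_inf; [exact: tilt_set_lbound | exists 1 => //=; rewrite ler01].
Qed.

Lemma tilt_sublinear y : sublinear (tilt y).
Proof.
split.
- move=> x1 x2; rewrite /tilt -inf_sumE; last 2 first.
  + by split; [exact: tilt_set_neq0 | exact: tilt_set_lbound].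
  + by split; [exact: tilt_set_neq0 | exact: tilt_set_lbound].
  apply: lb_le_inf.
    case: (tilt_set_neq0 y x1) => a1 h1; case: (tilt_set_neq0 y x2) => a2 h2.
    by exists (a1 + a2), a1 => //; exists a2.
  move=> _ [_ [t1 /= t10 <-] [_ [t2 /= t20 <-] <-]].
  have : tilt_set y (x1 + x2) (p (x1 + x2 + (t1 + t2) *: y) - (t1 + t2) * p y).
    by exists (t1 + t2) => //=; rewrite addr_ge0.
  move/(ge_inf (tilt_set_lbound _ _)) => h.
  have := sp.1 (x1 + t1 *: y) (x2 + t2 *: y).
  rewrite addrACA -scalerDl; lra.
- move=> k x k0; rewrite /tilt -inf_pmulE //; last 2 first.
  + exact: tilt_set_neq0.
  + exact: tilt_set_lbound.
  congr inf; apply/seteqP; split.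
  + move=> _ [t /= t0 <-]; exists (p (x + (t / k) *: y) - (t / k) * p y).
      by exists (t / k) => //=; rewrite divr_ge0 // ltW.
    rewrite mulrBr -(sp.2 k _ k0) scalerDr scalerA mulrCA divff ?gt_eqF // mulr1.
    by rewrite mulrA mulrCA divff ?gt_eqF // mulr1.
  + move=> _ [_ [t /= t0 <-] <-]; exists (k * t) => /=; first by rewrite mulr_ge0 // ltW.
    by rewrite mulrBr -(sp.2 k _ k0) scalerDr scalerA mulrA.
Qed.

End Sublinear.

Lemma chain_inf_sublinear (p : E -> R) (A : set (E -> R)) :
  A !=set0 -> (forall q, A q -> sublinear q /\ forall x, q x <= p x) ->
  (forall q r, A q -> A r -> (forall x, q x <= r x) \/ (forall x, r x <= q x)) ->
  sublinear (fun x => inf [set q x | q in A]).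
Proof.
move=> [q0 Aq0] Asub Atot.
have S0 x : [set q x | q in A] !=set0 by exists (q0 x), q0.
have Slb x : has_lbound [set q x | q in A].
  exists (- p (- x)) => _ [q Aq <-]; have [sq qp] := Asub q Aq.
  by have := sublinearN_le sq x; have := qp (- x); lra.
have inf_le x q : A q -> inf [set q x | q in A] <= q x.
  by move=> Aq; apply: ge_inf (Slb x) _ _; exists q.
split.
- move=> x y; rewrite -inf_sumE; [|by split|by split].
  apply: lb_le_inf.
    by case: (S0 x) => a1 h1; case: (S0 y) => a2 h2; exists (a1 + a2), a1 => //; exists a2.
  move=> _ [_ [q Aq <-] [_ [r Ar <-] <-]].
  have [qr|rq] := Atot _ _ Aq Ar.
  + apply: le_trans (inf_le (x + y) q Aq) _.
    by apply: le_trans ((Asub q Aq).1.1 x y) _; rewrite lerD2l.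
  + apply: le_trans (inf_le (x + y) r Ar) _.
    by apply: le_trans ((Asub r Ar).1.1 x y) _; rewrite lerD2r.
- move=> k x k0; rewrite -inf_pmulE //; congr inf; apply/seteqP; split.
  + by move=> _ [q Aq <-]; exists (q x); [exists q | rewrite (Asub q Aq).1.2].
  + by move=> _ [_ [q Aq <-] <-]; exists q => //; rewrite (Asub q Aq).1.2.
Qed.

Lemma exists_minimal_sublinear (p : E -> R) : sublinear p ->
  exists2 q, sublinear q /\ (forall x, q x <= p x) &
  forall g, sublinear g -> (forall x, g x <= q x) -> forall x, g x = q x.
Proof.
move=> sp; pose T := {q : E -> R | sublinear q /\ forall x, q x <= p x}.
pose below (q r : T) := `[< forall x, sval r x <= sval q x >].
have t0 : T by exists p.
have [t tmax] : exists t, premaximal below t.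
  apply: (@ZL_preorder T t0 below).
  - by move=> t; apply/asboolP.
  - move=> r s t /asboolP h1 /asboolP h2; apply/asboolP => x.
    exact: le_trans (h2 x) (h1 x).
  - move=> A Atot.
    have [[s0 As0]|A0] := pselect (A !=set0); last first.
      by exists t0 => s As; exfalso; apply: A0; exists s.
    pose B := [set sval q | q in A].
    have sB : sublinear (fun x => inf [set q x | q in B]).
      apply: chain_inf_sublinear; first by exists (sval s0), s0.
        by move=> _ [q _ <-]; exact: svalP q.
      move=> _ _ [q Aq <-] [r Ar <-].
      by have [/asboolP|/asboolP] := Atot _ _ Aq Ar; [right|left].
    have Blb x : has_lbound [set q x | q in B].
      exists (- p (- x)) => _ [_ [q _ <-] <-]; have [sq qp] := svalP q.
      by have := sublinearN_le sq x; have := qp (- x); lra.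
    have Bp x : inf [set q x | q in B] <= p x.
      apply: le_trans ((svalP s0).2 x).
      by apply: ge_inf (Blb x) _ _; exists (sval s0) => //; exists s0.
    exists (exist _ (fun x => inf [set q x | q in B]) (conj sB Bp)) => s As.
    apply/asboolP => x /=.
    by apply: ge_inf (Blb x) _ _; exists (sval s) => //; exists s.
exists (sval t) => [|g sg gt x]; first exact: svalP t.
have gp y : g y <= p y by apply: le_trans (gt y) ((svalP t).2 y).
have /tmax /asboolP tg : below t (exist _ g (conj sg gp)) by apply/asboolP.
by apply/eqP; rewrite eq_le gt tg.
Qed.

Lemma minimal_sublinear_scalar (q : E -> R) : sublinear q ->
  (forall g, sublinear g -> (forall x, g x <= q x) -> forall x, g x = q x) ->
  scalar q.
Proof.
move=> sq qmin.
have qN y : q (- y) = - q y.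
  have := qmin _ (tilt_sublinear sq y) (tilt_le sq y) (- y).
  by have := tiltN sq y; have := sublinearN_le sq y; lra.
have qD x y : q (x + y) = q x + q y.
  by have := sq.1 (- x) (- y); have := sq.1 x y; rewrite -opprD !qN; lra.
move=> a x y; rewrite qD; congr (_ + _).
have [a0|a0] := leP 0 a; first exact: sublinearZ_ge0.
by rewrite -[a]opprK scaleNr qN sublinearZ_ge0 ?mulNr // oppr_ge0 ltW.
Qed.

Lemma hahn_banach (p : E -> R) (v : E) : sublinear p ->
  exists2 f : {scalar E}, (forall x, f x <= p x) & f v = p v.
Proof.
move=> sp; have [q [sq qp] qmin] := exists_minimal_sublinear (tilt_sublinear sp v).
pose f : {scalar E} := HB.pack_for {scalar E} q
  (GRing.isLinear.Build R E R^o *%R q (minimal_sublinear_scalar sq qmin)).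
exists f => [x|]; first exact: le_trans (qp x) (tilt_le sp v x).
have qN : q (- v) = - q v := linearN f v.
have := le_trans (qp (- v)) (tiltN sp v); have := le_trans (qp v) (tilt_le sp v v).
by rewrite qN /=; lra.
Qed.

End HahnBanach.

Section Separation.
Context (R : realType) (E : lmodType R).

Definition is_convex (A : set E) := forall x y (t : R), A x -> A y -> 0 < t < 1 ->
  A (t *: x + (1 - t) *: y).

Lemma convex_comb_id (t : R) (x : E) : t *: x + (1 - t) *: x = x.
Proof. by rewrite -scalerDl addrC subrK scale1r. Qed.

Definition acore (A : set E) : set E :=
  [set x | forall d, exists2 del : R, 0 < del &
     forall t, 0 <= t <= del -> A (x + t *: d)].

Definition gauge (C : set E) (x : E) := inf [set s : R | 0 < s /\ C (s^-1 *: x)].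

Section Gauge.
Variable C : set E.
Hypotheses (C_convex : is_convex C) (C_core0 : acore C 0).

Let gauge_set_neq0 x : [set s : R | 0 < s /\ C (s^-1 *: x)] !=set0.
Proof.
have [del del0 hd] := C_core0 x; exists del^-1; split; first by rewrite invr_gt0.
by rewrite invrK -[_ *: x]add0r; apply: hd; rewrite lexx ltW.
Qed.

Let gauge_set_lbound x : has_lbound [set s : R | 0 < s /\ C (s^-1 *: x)].
Proof. by exists 0 => s [/ltW]. Qed.

Lemma gauge_ge0 x : 0 <= gauge C x.
Proof. by apply: lb_le_inf => // s [/ltW]. Qed.

Let C0 : C 0.
Proof. by have [del del0 /(_ 0)] := C_core0 0; rewrite scale0r addr0; apply; rewrite lexx ltW. Qed.

Lemma gauge_lt x s : 0 < s -> gauge C x < s -> C (s^-1 *: x).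
Proof.
move=> s0 /(inf_lt (gauge_set_neq0 x)) [s1 [s10 Cs1] s1s].
have := @C_convex _ _ (s1 / s) Cs1 C0.
rewrite scaler0 addr0 scalerA mulrAC divff ?gt_eqF // mul1r; apply.
by rewrite divr_gt0 //= ltr_pdivrMr // mul1r.
Qed.

Lemma gauge_le1 x : C x -> gauge C x <= 1.
Proof.
by move=> Cx; apply: ge_inf (gauge_set_lbound x) _ _; split; rewrite ?ltr01 // invr1 scale1r.
Qed.

Lemma gauge_ge1 x : ~ C x -> 1 <= gauge C x.
Proof. by move=> Cx; rewrite leNgt; apply/negP => /(gauge_lt ltr01); rewrite invr1 scale1r. Qed.

Lemma gauge_sublinear : sublinear (gauge C).
Proof.
split.
- move=> x y; apply/ler_addgt0Pr => e e0.
  set s := gauge C x + e / 2; set t := gauge C y + e / 2.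
  have s0 : 0 < s by rewrite /s; have := gauge_ge0 x; lra.
  have t0 : 0 < t by rewrite /t; have := gauge_ge0 y; lra.
  have Cx : C (s^-1 *: x) by apply: gauge_lt => //; rewrite /s; lra.
  have Cy : C (t^-1 *: y) by apply: gauge_lt => //; rewrite /t; lra.
  have Cxy : C ((s + t)^-1 *: (x + y)).
    have := @C_convex _ _ (s / (s + t)) Cx Cy.
    have -> : s / (s + t) *: (s^-1 *: x) + (1 - s / (s + t)) *: (t^-1 *: y) =
              (s + t)^-1 *: (x + y).
      by rewrite !scalerA scalerDr; congr (_ *: _ + _ *: _); field; rewrite !gt_eqF // addr_gt0.
    have st0 : 0 < s + t by rewrite addr_gt0.
    apply; apply/andP; split; first by rewrite divr_gt0.
    by rewrite (ltr_pdivrMr _ _ st0) mul1r ltrDl.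
  have : gauge C (x + y) <= s + t.
    by apply: ge_inf (gauge_set_lbound (x + y)) _ _; split => //; rewrite addr_gt0.
  by rewrite /s /t; lra.
- move=> k x k0; rewrite /gauge -inf_pmulE //; congr inf; apply/seteqP; split.
  + move=> s [s0 Cs]; exists (s / k).
      split; first by rewrite divr_gt0.
      by rewrite invf_div scalerA mulrC in Cs *.
    by rewrite mulrCA divff ?gt_eqF // mulr1.
  + move=> _ [s [s0 Cs] <-]; split; first by rewrite mulr_gt0.
    by rewrite scalerA; have -> : (k * s)^-1 * k = s^-1 by field; rewrite !gt_eqF.
Qed.

End Gauge.

Lemma convex_separation (A B : set E) (a0 b0 : E) :
  is_convex A -> is_convex B -> acore A a0 -> B b0 -> (forall x, A x -> ~ B x) ->
  exists f : {scalar E}, (forall a b, A a -> B b -> f a <= f b) /\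
    exists2 a1, A a1 & f a0 < f a1.
Proof.
move=> cA cB coreA Bb0 AB.
set v := b0 - a0.
(* [f] is a linear minorant of the gauge of [C] with [f v = gauge C v >= 1]:
   [C] absorbs every direction at [0] but misses [v]. *)
pose C := [set x | exists a b, [/\ A a, B b & x = a - b + v]].
have cC : is_convex C.
  move=> _ _ t [a [b [Aa Bb ->]]] [a' [b' [Aa' Bb' ->]]] t01.
  exists (t *: a + (1 - t) *: a'), (t *: b + (1 - t) *: b'); split; [exact: cA|exact: cB|].
  by rewrite !scalerDr !scalerN addrACA [X in X + _]addrACA -opprD -!scalerBr convex_comb_id.
have C0 : acore C 0.
  move=> d; have [del del0 hd] := coreA d; exists del => // t ht.
  exists (a0 + t *: d), b0; split => //; first exact: hd.
  by rewrite add0r /v addrA subrK addrC addKr.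
have Cv : ~ C v.
  move=> [a [b [Aa Bb /eqP]]]; rewrite eq_sym -subr_eq0 addrK subr_eq0 => /eqP eab.
  by apply: (AB a) => //; rewrite eab.
have [f fle fv] := hahn_banach v (gauge_sublinear cC C0).
have fv1 : 1 <= f v by rewrite fv (gauge_ge1 cC C0 Cv).
exists f; split.
  move=> a b Aa Bb; have /gauge_le1 : C (a - b + v) by exists a, b.
  by have := fle (a - b + v); rewrite linearD linearB; lra.
have [del del0 hd] := coreA v.
exists (a0 + del *: v); first by apply: hd; rewrite lexx ltW.
by rewrite linearD linearZ /= ltrDl mulr_gt0 //; lra.
Qed.

End Separation.

HB.instance Definition _ (R : realType) (X : tvsType R) (f : dual X) :=
  GRing.isLinear.Build R X R^o *%R (dual_fun f) (dual_linear f).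

Section FitzpatrickFunction.
Context (R : realType) (X : tvsType R).
Local Notation D := (dual X).
Local Notation ZX := (Z X).

Fact dual_lincomb_linear (a : R) (f : D) (b : R) (g : D) (c : R) (x y : X) :
  a * f (c *: x + y) + b * g (c *: x + y) = c * (a * f x + b * g x) + (a * f y + b * g y).
Proof. by rewrite !linearP /=; ring. Qed.

Fact dual_lincomb_continuous (a : R) (f : D) (b : R) (g : D) :
  continuous (fun x => a * f x + b * g x).
Proof. by move=> x; apply: (@cvgD _ R^o); apply: cvgMl_tmp; exact: dual_cont. Qed.

Definition dual_lincomb (a : R) (f : D) (b : R) (g : D) : D :=
  Dual (@dual_lincomb_linear a f b g) (@dual_lincomb_continuous a f b g).

Fact dual0_linear (c : R) (x y : X) : 0 = c * 0 + 0 :> R.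
Proof. by rewrite mulr0 addr0. Qed.

Definition dual0 : D := Dual dual0_linear (fun x => cvg_cst (0 : R)).

Definition fitz_term (z u : ZX) : R := z.2 u.1 + u.2 z.1 - u.2 u.1.

Definition mono_gap (z u : ZX) : R := z.2 (z.1 - u.1) - u.2 (z.1 - u.1).

Lemma fitz_term_diag z : fitz_term z z = coupling z.
Proof. by rewrite /fitz_term /coupling addrK. Qed.

Lemma coupling_sub_fitz_term z u : coupling z - fitz_term z u = mono_gap z u.
Proof. by rewrite /fitz_term /coupling /mono_gap !linearB /=; ring. Qed.

Lemma phiT_ge (S : set ZX) z u : S u -> ((fitz_term z u)%:E <= phiT S z)%E.
Proof. by move=> Su; apply: ereal_sup_ubound; exists u. Qed.

Lemma phiT_le (S : set ZX) z (r : \bar R) :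
  (forall u, S u -> ((fitz_term z u)%:E <= r)%E) -> (phiT S z <= r)%E.
Proof. by move=> h; apply: ge_ereal_sup => _ [u Su <-]; apply: h. Qed.

Lemma phiT_le_coupling (S : set ZX) z :
  (phiT S z <= (coupling z)%:E)%E <-> forall u, S u -> 0 <= mono_gap z u.
Proof.
split => [h u Su|h].
- by have := le_trans (phiT_ge z Su) h; rewrite lee_fin -subr_ge0 coupling_sub_fitz_term.
- by apply: phiT_le => u Su; rewrite lee_fin -subr_ge0 coupling_sub_fitz_term; apply: h.
Qed.

Lemma phiT_convex (S : set ZX) : convex_fun (phiT S).
Proof.
move=> z1 z2 z t /andP[t0 t1] e1 e2; apply: phiT_le => u Su.
have -> : fitz_term z u = t * fitz_term z1 u + (1 - t) * fitz_term z2 u.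
  by rewrite /fitz_term e1 e2 linearD !linearZ /=; ring.
rewrite EFinD !EFinM; apply: leeD; apply: lee_wpmul2l; try exact: phiT_ge.
  by rewrite lee_fin ltW.
by rewrite lee_fin subr_ge0 ltW.
Qed.

Lemma phiT_lsc (S : set ZX) : lsc_fun (phiT S).
Proof.
move=> r z /= /negP; rewrite -ltNge.
move/ereal_sup_gt => [_ [u Su <-]]; rewrite lte_fin => ru.
(* [fitz_term _ u] is continuous in the first variable and depends on the
   second one only through its value at [u.1] *)
pose eps := (fitz_term z u - r) / 2.
have eps0 : 0 < eps by rewrite divr_gt0 // subr_gt0.
exists [set y | `|u.2 y - u.2 z.1| < eps]; split.
  have /cvgrPdist_lt/(_ eps eps0) := @dual_cont _ _ u.2 z.1.
  by apply: filterS => y /=; rewrite distrC.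
exists [:: u.1], eps => // y y' /= uy /(_ u.1); rewrite mem_seq1 eqxx => /(_ isT) y'u.
move=> /(le_trans (phiT_ge (y, y') Su)); rewrite lee_fin /fitz_term /= => le.
by move: uy y'u => /ltr_distlCBl uy /ltr_distlCBl y'u; rewrite /eps /fitz_term in ru uy y'u; lra.
Qed.

Lemma restr_setT (T : set ZX) : restr T setT = T.
Proof. by apply/seteqP; split => [z []|z Tz]. Qed.

Lemma identifies_V_NI (V : set X) (T : set ZX) : identifies V T -> V_NI V T.
Proof.
move=> idT z Vz; rewrite leNgt; apply/negP => lt.
have Tz : T z by apply: idT => //; exact: ltW.
have := phiT_ge z (conj Tz Vz : restr T V z); rewrite fitz_term_diag => h.
by move: (le_lt_trans h lt); rewrite ltxx.
Qed.

Lemma representable_of_identifies (T : set ZX) :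
  in_MX T -> identifies setT T -> representable T.
Proof.
move=> [monoT [z0 Tz0]] idT.
have phi_ge z : ((coupling z)%:E <= phiT T z)%E.
  by have := identifies_V_NI idT (z := z) I; rewrite restr_setT.
have phi_eq z : T z -> phiT T z = (coupling z)%:E.
  move=> Tz; apply/eqP; rewrite eq_le phi_ge andbT.
  by apply/phiT_le_coupling => u Tu; apply: monoT.
exists (phiT T); split => //; [split | exact: phiT_convex | exact: phiT_lsc |].
- by move=> z; apply/negP => /eqP e; have := phi_ge z; rewrite e leeNy_eq.
- by exists z0; rewrite phi_eq.
- apply/seteqP; split => z /=; last exact: phi_eq.
  by move=> e; apply: idT; rewrite // restr_setT e.
Qed.

Lemma representable_monotone (T : set ZX) : representable T -> monotone_op T.
Proof.
move=> [h [_ ch _ hc eT]] z w Tz Tw.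
have [hz hw] : h z = (coupling z)%:E /\ h w = (coupling w)%:E.
  by rewrite -eT in Tz Tw.
pose t : R := 2^-1.
have t01 : 0 < t < 1 by apply/andP; split; rewrite /t; lra.
pose m : ZX := (t *: z.1 + (1 - t) *: w.1, dual_lincomb t z.2 (1 - t) w.2).
have := ch z w m t t01 erefl (fun u => erefl).
rewrite hz hw -!EFinM -EFinD => /(le_trans (hc m)).
(* c m <= h m <= (c z + c w) / 2, and (c z + c w) / 2 - c m = mono_gap z w / 4 *)
rewrite lee_fin /coupling /mono_gap /m /= !linearD !linearZ !linearN /t /=; lra.
Qed.

Lemma V_NI_setT_neq0 (T : set ZX) : V_NI setT T -> T !=set0.
Proof.
move=> NI; apply/set0P/negP => /eqP T0.
have := NI (0, dual0) I; rewrite T0.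
have -> : restr set0 setT = set0 :> set ZX by apply/seteqP; split => [? []|].
by rewrite /phiT image_set0 ereal_sup0 leeNy_eq.
Qed.

End FitzpatrickFunction.

Section TopologicalVectorSpace.
Context (R : realType) (X : tvsType R).

Lemma nbhs_affine (x0 p : X) (k : R) (U : set X) :
  nbhs x0 U -> nbhs p [set y | U (x0 + k *: (y - p))].
Proof.
move=> U0.
have : (fun y => x0 + k *: (y - p)) @ p --> x0 + k *: (p - p).
  apply: (@continuous2_cvg _ _ _ _ _ _ (fun _ => x0) (fun y => k *: (y - p)) (fun a b => a + b)).
  - exact: (@add_continuous X (x0, k *: (p - p))).
  - exact: cvg_cst.
  apply: (@continuous2_cvg _ _ _ _ _ _ (fun _ => k) (fun y => y - p)
    (fun (a : R^o) (b : X) => a *: b)).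
  - exact: (@scale_continuous _ X (k, p - p)).
  - exact: cvg_cst.
  apply: (@continuous2_cvg _ _ _ _ _ _ id (fun _ => p) (fun (a : X) (b : X) => a - b)).
  - exact: (@sub_continuous X (p, p)).
  - exact: cvg_id.
  - exact: cvg_cst.
by rewrite subrr scaler0 addr0 => /(_ U U0).
Qed.

Lemma nbhs_acore (x0 : X) (U : set X) : nbhs x0 U -> acore U x0.
Proof.
move=> U0 d.
have : (fun t : R^o => x0 + t *: d) @ (0 : R^o) --> x0 + (0 : R^o) *: d.
  apply: (@continuous2_cvg _ _ _ _ _ _ (fun _ => x0) (fun t : R^o => t *: d) (fun a b => a + b)).
  - exact: (@add_continuous X (x0, 0 *: d)).
  - exact: cvg_cst.
  apply: (@continuous2_cvg _ _ _ _ _ _ id (fun _ => d) (fun (a : R^o) (b : X) => a *: b)).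
  - exact: (@scale_continuous _ X (0, d)).
  - exact: cvg_id.
  - exact: cvg_cst.
rewrite scale0r addr0 => /(_ U U0) /= /nbhs_ballP [e /= e0 he].
exists (e / 2); first by rewrite divr_gt0.
move=> t /andP[t0 te]; apply: he; rewrite /ball /= sub0r normrN ger0_norm //.
by apply: le_lt_trans te _; rewrite ltr_pdivrMr // ltr_pMr // ltr1n.
Qed.

Lemma nbhs_convex_sub (x0 : X) (N : set X) : nbhs x0 N ->
  exists2 U, nbhs x0 U /\ is_convex U & U `<=` N.
Proof.
move=> Nx0; have [B Bconvex [Bopen Bbasis]] := @locally_convex R X.
have [U [BU Ux0] UN] := Bbasis x0 N Nx0.
exists U => //; split; first by apply: open_nbhs_nbhs; split => //; exact: Bopen.
move=> y1 y2 t U1 U2 /andP[t0 t1].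
have := Bconvex U (mem_set BU) y1 y2 (Itv01 (ltW t0) (ltW t1)) (mem_set U1) (mem_set U2).
by rewrite inE.
Qed.

(* A linear functional bounded above near one point is bounded near every
   point, with a bound that shrinks with the neighbourhood. *)
Lemma scalar_continuous_of_ubound (L : {scalar X}) (U : set X) (x0 : X) (M : R) :
  nbhs x0 U -> (forall y, U y -> L y <= M) -> continuous L.
Proof.
move=> Ux0 LM p; apply/cvgrPdist_lt => eps eps0.
pose K := M - L x0 + 1.
have K0 : 0 < K by have := LM _ (nbhs_singleton Ux0); rewrite /K; lra.
pose k := 2 * K / eps.
have k0 : 0 < k by rewrite /k divr_gt0 // mulr_gt0.
apply: filterS (filterI (nbhs_affine p k Ux0) (nbhs_affine p (- k) Ux0)).
move=> y [/LM u1 /LM u2].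
have Laff c : L (x0 + c *: (y - p)) = L x0 + c * (L y - L p).
  by rewrite linearD linearZ linearB.
rewrite !Laff in u1 u2.
have : k * `|L p - L y| <= K - 1.
  rewrite -{1}(ger0_norm (ltW k0)) -normrM ler_norml; apply/andP; split; rewrite /K; lra.
rewrite -(ltr_pM2l k0); have -> : k * eps = 2 * K by rewrite /k; field; rewrite gt_eqF.
lra.
Qed.

End TopologicalVectorSpace.

Lemma scalar_fct_eval (R : realType) (T : eqType) (L : {scalar (T -> R)})
    (s : seq T) (g0 : T -> R) (e M : R) :
  0 < e -> (forall g, (forall u, u \in s -> `|g u - g0 u| < e) -> L g <= M) ->
  forall g, L g = \sum_(u <- undup s) g u * L (fun x => (x == u)%:R).
Proof.
move=> e0 LM.
have Lvan g : (forall u, u \in s -> g u = 0) -> L g = 0.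
  move=> gs; have Lk (k : R) : k * L g + L g0 <= M.
    rewrite -linearP; apply: LM => u us /=.
    have -> : (k *: g + g0) u = k * g u + g0 u by [].
    by rewrite gs // mulr0 add0r subrr normr0.
  apply/eqP; apply/negP => /negP Lg0.
  have := Lk ((`|M - L g0| + 1) / L g); rewrite -mulrA mulVf // mulr1.
  by have := ler_norm (M - L g0); lra.
move=> g; pose g1 := \sum_(u <- undup s) g u *: (fun x => (x == u)%:R : R).
rewrite -{1}(subrK g1 g) linearD Lvan ?add0r; last first.
  move=> x xs; have -> : (g - g1) x = g x - g1 x by [].
  have scaleE (a : R) (f : T -> R) y : (a *: f) y = a * f y by [].
  rewrite /g1 fct_sumE (big_rem x) ?mem_undup //= big_seq_cond big1 ?addr0.
    by rewrite scaleE eqxx mulr1 subrr.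
  move=> u /andP[+ _]; rewrite (mem_rem_uniq _ (undup_uniq s)) => /andP[ux _].
  by rewrite scaleE eq_sym (negbTE ux) mulr0.
by rewrite /g1 linear_sum; apply: eq_bigr => u _; rewrite linearZ.
Qed.

Lemma convex_comb_lt (R : realFieldType) (t a b c : R) :
  0 < t < 1 -> a < c -> b < c -> t * a + (1 - t) * b < c.
Proof.
case/andP => t0 t1 ac bc.
have : t * a < t * c by rewrite ltr_pM2l.
have : (1 - t) * b < (1 - t) * c by rewrite ltr_pM2l // subr_gt0.
lra.
Qed.

Lemma convex_comb_norm_lt (R : realFieldType) (t a b e : R) :
  0 < t < 1 -> `|a| < e -> `|b| < e -> `|t * a + (1 - t) * b| < e.
Proof.
move=> t01 ae be; apply: le_lt_trans (ler_normD _ _) _; case/andP: (t01) => t0 t1.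
have t0' : 0 <= t by exact: ltW.
have t1' : 0 <= 1 - t by rewrite subr_ge0 ltW.
by rewrite !normrM (ger0_norm t0') (ger0_norm t1') convex_comb_lt.
Qed.

Section EpigraphSeparation.
Context (R : realType) (X : tvsType R).
Local Notation D := (dual X).
Local Notation ZX := (Z X).
Local Notation E := (X * (X -> R) * R)%type.

Definition embX (y : X) : E := ((y, 0), 0).
Definition embF (g : X -> R) : E := ((0, g), 0).
Definition embR : E := ((0, 0), 1).

Fact embX_linear : linear embX.
Proof.
by move=> a x y; rewrite /embX; congr (_, _); [congr (_, _)|]; rewrite /= ?scaler0 ?addr0.
Qed.
HB.instance Definition _ := GRing.isLinear.Build R X E *:%R embX embX_linear.

Fact embF_linear : linear embF.
Proof.
by move=> a x y; rewrite /embF; congr (_, _); [congr (_, _)|]; rewrite /= ?scaler0 ?addr0.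
Qed.
HB.instance Definition _ := GRing.isLinear.Build R (X -> R) E *:%R embF embF_linear.

Lemma scalar_prodE (f : {scalar E}) y g r :
  f ((y, g), r) = (f \o embX) y + (f \o embF) g + r * f embR.
Proof.
have -> : ((y, g), r) = embX y + embF g + r *: embR.
  rewrite /embX /embF /embR; congr (_, _); [congr (_, _)|]; rewrite /= ?scaler0 ?addr0 ?add0r //.
  by rewrite -[LHS]mulr1.
by rewrite !linearD linearZ.
Qed.

Definition box (U : set X) (s : seq X) (g0 : X -> R) (e beta : R) : set E :=
  [set a | [/\ U a.1.1, forall u, u \in s -> `|a.1.2 u - g0 u| < e & a.2 < beta]].

Definition epigraph (h : ZX -> \bar R) : set E :=
  [set b | exists y' : D, b.1.2 = dual_fun y' /\ (h (b.1.1, y') <= b.2%:E)%E].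

Lemma box_convex U s g0 e beta : is_convex U -> is_convex (box U s g0 e beta).
Proof.
move=> cU [[y1 g1] r1] [[y2 g2] r2] t [U1 s1 r1b] [U2 s2 r2b] t01; split => /=.
- exact: cU.
- move=> u us.
  have -> : t * g1 u + (1 - t) * g2 u - g0 u =
            t * (g1 u - g0 u) + (1 - t) * (g2 u - g0 u) by ring.
  by apply: convex_comb_norm_lt => //; [apply: s1 | apply: s2].
- exact: convex_comb_lt.
Qed.

Lemma box_acore U s g0 e beta x r : nbhs x U -> 0 < e -> r < beta ->
  acore (box U s g0 e beta) ((x, g0), r).
Proof.
move=> Ux e0 rb [[dy dg] dr].
have [d1 d10 hd1] := nbhs_acore Ux dy.
pose Mg := \sum_(v <- s) `|dg v|.
have Mg0 : 0 <= Mg by apply: sumr_ge0 => *; exact: normr_ge0.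
pose d2 := e / (1 + Mg).
have d20 : 0 < d2 by apply: divr_gt0 => //; lra.
pose d3 := (beta - r) / (1 + `|dr|).
have d30 : 0 < d3 by apply: divr_gt0; [lra | have := normr_ge0 dr; lra].
exists (Order.min d1 (Order.min d2 d3)); first by rewrite !lt_min d10 d20 d30.
move=> t /andP[t0]; rewrite !le_min => /andP[td1 /andP[td2 td3]]; split => /=.
- by apply: hd1; rewrite t0 td1.
- move=> u us; rewrite addrAC subrr add0r normrM ger0_norm //.
  have hu : `|dg u| <= Mg.
    by rewrite /Mg (big_rem u) //= lerDl sumr_ge0 // => *; exact: normr_ge0.
  apply: le_lt_trans (ler_wpM2r (normr_ge0 _) td2) _.
  apply: le_lt_trans (ler_wpM2l (ltW d20) hu) _.
  by rewrite /d2 mulrAC ltr_pdivrMr; [rewrite ltr_pM2l //; lra | lra].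
- have : t * dr <= d3 * `|dr|.
    apply: le_trans (ler_norm _) _; rewrite normrM ger0_norm //.
    by apply: ler_wpM2r => //; exact: normr_ge0.
  have : d3 * `|dr| < beta - r.
    rewrite /d3 mulrAC ltr_pdivrMr; last by have := normr_ge0 dr; lra.
    by rewrite ltr_pM2l; lra.
  rewrite /GRing.scale /=; lra.
Qed.

Lemma epigraph_convex h : convex_fun h -> is_convex (epigraph h).
Proof.
move=> ch [[y1 g1] r1] [[y2 g2] r2] t [y1' [/= e1 h1]] [y2' [/= e2 h2]] t01.
exists (dual_lincomb t y1' (1 - t) y2'); split => /=.
  by apply/funext => x /=; rewrite e1 e2.
have := ch (y1, y1') (y2, y2') (t *: y1 + (1 - t) *: y2, dual_lincomb t y1' (1 - t) y2')
  t t01 erefl (fun u => erefl).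
move/le_trans; apply; case/andP: t01 => t0 t1.
have -> : t *: r1 + (1 - t) *: r2 = t * r1 + (1 - t) * r2 by [].
rewrite (@EFinD _ (t * r1) ((1 - t) * r2)) (@EFinM _ t r1) (@EFinM _ (1 - t) r2).
by apply: leeD; apply: lee_wpmul2l => //; rewrite lee_fin ?subr_ge0 ltW.
Qed.

Lemma epigraph_strict_separation (h : ZX -> \bar R) (z : ZX) (r0 : R) :
  proper_fun h -> convex_fun h -> lsc_fun h -> (r0%:E < h z)%E ->
  exists (a : D) (w : X) (lam kap : R), 0 < kap /\
    forall u (r : R), (h u <= r%:E)%E ->
      a z.1 + z.2 w + lam * r0 + kap <= a u.1 + u.2 w + lam * r.
Proof.
move=> [_ [zp hzp]] ch lh r0h.
have [beta r0b bh] : exists2 beta : R, r0 < beta & (beta%:E < h z)%E.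
  move: r0h; case: (h z) => [hr| |] //.
  - by rewrite lte_fin => lt; exists ((r0 + hr) / 2); [lra | rewrite lte_fin; lra].
  - by move=> _; exists (r0 + 1); [lra | rewrite ltry].
have /lh [N [Nz [s [e e0 hN]]]] : ~ (h z <= beta%:E)%E by apply/negP; rewrite -ltNge.
have [U [Uz cU] UN] := nbhs_convex_sub Nz.
pose A := box U s z.2 e beta.
pose bp : E := ((zp.1, dual_fun zp.2), fine (h zp)).
have Bbp : epigraph h bp by exists zp.2; rewrite /= fineK //; case: (zp).
have AB a : A a -> ~ epigraph h a.
  move: a => [[y g] r] [/= Uy hs hr] [y' [/= eg hle]].
  apply: (hN y y' (UN _ Uy)); first by move=> u us; rewrite -eg; apply: hs.
  by apply: le_trans hle _; rewrite lee_fin ltW.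
have [f [fAB [a1 Aa1 fa1]]] := convex_separation
  (box_convex (s := s) (g0 := z.2) (e := e) (beta := beta) cU)
  (epigraph_convex ch) (box_acore s z.2 Uz e0 r0b) Bbp AB.
(* [f] is bounded above on the box, so its [X]-part is continuous and its
   [X -> R]-part only sees the values at [s], i.e. is evaluation at some [w]. *)
have fA y g : U y -> (forall u, u \in s -> `|g u - z.2 u| < e) ->
    (f \o embX) y + (f \o embF) g + r0 * f embR <= f bp.
  by move=> Uy hg; rewrite -scalar_prodE; apply: fAB.
have L1cont : continuous (f \o embX).
  apply: (scalar_continuous_of_ubound (M := f bp - (f \o embF) z.2 - r0 * f embR) Uz) => y Uy.
  have hz2 u : u \in s -> `|z.2 u - z.2 u| < e by rewrite subrr normr0.
  by have := fA y z.2 Uy hz2; rewrite /=; lra.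
have [w L2w] : exists w : X, forall y' : D, (f \o embF) y' = y' w.
  have L2eval := scalar_fct_eval (L := f \o embF) (s := s) (g0 := z.2)
    (M := f bp - (f \o embX) z.1 - r0 * f embR) e0.
  exists (\sum_(u <- undup s) (f \o embF) (fun x => (x == u)%:R) *: u) => y'.
  rewrite L2eval => [|g hg]; last by have := fA _ g (nbhs_singleton Uz) hg; rewrite /=; lra.
  by rewrite linear_sum; apply: eq_bigr => u _; rewrite linearZ /= mulrC.
pose a0 : E := ((z.1, dual_fun z.2), r0).
have L1lin c x y : (f \o embX) (c *: x + y) = c * (f \o embX) x + (f \o embX) y.
  by rewrite linearP.
exists (Dual L1lin L1cont), w, (f embR), (f a1 - f a0).
split=> [|[u1 u2] r hur]; first by rewrite subr_gt0.
have : f a1 <= f ((u1, dual_fun u2), r) by apply: fAB => //; exists u2.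
by rewrite /a0 (scalar_prodE f u1) (scalar_prodE f z.1) -!L2w /=; lra.
Qed.

End EpigraphSeparation.

Section Identification.
Context (R : realType) (X : tvsType R).
Local Notation D := (dual X).
Local Notation ZX := (Z X).

Lemma mono_gap_shift (z u : ZX) (q : X) (qs : D) (t : R) :
  mono_gap (z.1 - t *: q, dual_lincomb 1 z.2 (- t) qs) u =
  mono_gap z u + t * (qs (u.1 - z.1) + u.2 q - z.2 q) + t ^+ 2 * qs q.
Proof. by rewrite /mono_gap /= !linearB !linearZ /= /GRing.scale /=; ring. Qed.

Lemma separation_not_V_NI (T : set ZX) (V : set X) (z : ZX) (a : D) (w : X) (lam kap : R) :
  alg_open V -> V_NI V T -> V z.1 -> (phiT (restr T V) z <= (coupling z)%:E)%E ->
  0 < kap ->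
  ~ (forall u, T u -> a z.1 + z.2 w + lam * coupling z + kap <=
                      a u.1 + u.2 w + lam * coupling u).
Proof.
move=> aoV NI Vz phiz kap0 sep.
pose qs := dual_lincomb 1 a lam z.2.
pose q := w + lam *: z.1.
have slope u : T u -> kap - lam * mono_gap z u <= qs (u.1 - z.1) + u.2 q - z.2 q.
  move=> Tu; have := sep u Tu.
  rewrite /mono_gap /coupling /qs /q /= !linearB !linearD !linearZ /= /GRing.scale /=; lra.
have Vcore : core V z.1 by rewrite -aoV.
have [dV dV0 hdV] := Vcore (- q).
have [t [t0 tdV tlam tQ]] : exists t : R,
    [/\ 0 < t, t <= dV, t * `|lam| <= 1 & t * `|qs q| <= kap / 2].
  pose K := `|qs q| + `|lam| + 1.
  have K1 : 1 <= K by rewrite /K lerDr addr_ge0.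
  pose m := Order.min dV (Order.min 1 (kap / 2)).
  have m0 : 0 < m by rewrite !lt_min dV0 ltr01 divr_gt0.
  have [mdV m1 mkap] : [/\ m <= dV, m <= 1 & m <= kap / 2].
    by rewrite /m !ge_min !lexx ?orbT.
  have K0 : 0 < K by exact: lt_le_trans ltr01 K1.
  have mK x : x <= K -> m / K * x <= m.
    by move=> xK; rewrite mulrAC ler_pdivrMr // ler_pM2l.
  exists (m / K); split; first by rewrite divr_gt0.
  - by have := mK 1 K1; rewrite mulr1; lra.
  - by have := mK _ (_ : `|lam| <= K); rewrite /K; have := normr_ge0 (qs q); lra.
  - by have := mK _ (_ : `|qs q| <= K); rewrite /K; have := normr_ge0 lam; lra.
(* with [S >= kap - lam * P] (slope), [P >= 0] and the choice of [t], the gap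
   [P + t * S + t ^+ 2 * qs q] to every [u] in [T|V] is at least [t * kap / 2] *)
pose zt : ZX := (z.1 - t *: q, dual_lincomb 1 z.2 (- t) qs).
have Vzt : V zt.1 by rewrite /= -scalerN; apply: hdV; rewrite (ltW t0) tdV.
have gap u : T u -> V u.1 -> t * kap / 2 <= mono_gap zt u.
  move=> Tu Vu; rewrite mono_gap_shift.
  have P0 : 0 <= mono_gap z u by move/phiT_le_coupling: phiz; apply.
  have := slope u Tu; set P := mono_gap z u; set S := qs (u.1 - z.1) + _ - _ => PS.
  have tS : t * (kap - lam * P) <= t * S by rewrite ler_wpM2l // ltW.
  have lamP : 0 <= (1 - t * lam) * P.
    by rewrite mulr_ge0 // subr_ge0 (le_trans _ tlam) // ler_wpM2l ?ler_norm // ltW.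
  have Qterm : - (t * (kap / 2)) <= t ^+ 2 * qs q.
    have Qlb : - (t * `|qs q|) <= t * qs q.
      by rewrite -mulrN ler_wpM2l ?(ltW t0) // lerNl -normrN ler_norm.
    have : t * - (t * `|qs q|) <= t * (t * qs q) by rewrite ler_wpM2l // ltW.
    have : t * (t * `|qs q|) <= t * (kap / 2) by rewrite ler_wpM2l // ltW.
    by rewrite expr2; lra.
  lra.
clear phiz.
have : (phiT (restr T V) zt <= (coupling zt - t * kap / 2)%:E)%E.
  apply: phiT_le => u [Tu Vu]; rewrite lee_fin.
  by have := gap u Tu Vu; rewrite -coupling_sub_fitz_term; lra.
move=> /(le_trans (NI zt Vzt)); rewrite lee_fin.
have : 0 < t * kap / 2 by rewrite !mulr_gt0.
lra.
Qed.

End Identification.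

Lemma identifies_of_representable (R : realType) (X : tvsType R) (T : set (Z X))
    (V : set X) :
  representable T -> alg_open V -> V_NI V T -> identifies V T.
Proof.
move=> [h [hp hc hl hge eT]] aoV NI z Vz phiz.
rewrite -eT /=; apply/eqP; rewrite eq_le hge andbT leNgt; apply/negP => hz.
have [a [w [lam [kap [kap0 sep]]]]] := epigraph_strict_separation hp hc hl hz.
apply: (separation_not_V_NI aoV NI Vz phiz kap0) => u Tu.
by apply: sep; rewrite -eT in Tu; rewrite Tu.
Qed.

Theorem theorem3p3 (R : realType) (X : tvsType R)
  (hX : hausdorff_space X) (hnt : exists x : X, x != 0)
  (T : set (Z X)) (VV : set (set X))
  (hVV : forall V, VV V -> alg_open V) (hXV : VV setT) :
  (in_MX T /\ forall V, VV V -> identifies V T) <->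
  (representable T /\ forall V, VV V -> V_NI V T).
Proof.
split=> [[MT idT]|[rT NI]].
- split; first exact: representable_of_identifies MT (idT _ hXV).
  by move=> V VV_V; apply: identifies_V_NI; apply: idT.
- split; first by split; [exact: representable_monotone | exact: V_NI_setT_neq0 (NI _ hXV)].
  by move=> V VV_V; apply: identifies_of_representable => //; [apply: hVV | apply: NI].
Qed.
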